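(* Let $A:\mathbb{C}^n\to\mathbb{C}^m$ be linear with $\lVert A\rVert_{2\to2}\le1$ and $A^*A$ injective, $b\in\mathbb{C}^m$, $\lambda>0$, $g:\mathbb{C}^n\to\mathbb{R}$ closed proper convex, and let $x^\star$ minimize $\frac12\lVert Ax-b\rVert_2^2+\lambda g(x)$. Let $p$ be a real polynomial, and set $$\gamma=\lVert I-p(A^*A)A^*A\rVert_{2\to2},\qquad \delta=\lVert (I-p(A^*A))A^*(Ax^\star-b)\rVert_2,$$ and assume $\gamma<1$. Let $y_0\in\mathbb{C}^n$ be arbitrary and $y_{k+1}=\mathrm{prox}_{\lambda g}\bigl(y_k-p(A^*A)A^*(Ay_k-b)\bigr)$, and $e_k=y_k-x^\star$. Then $\lVert e_{k+1}\rVert_2\le\gamma\lVert e_k\rVert_2+\delta$ for all $k\ge0$, and consequently $$\limsup_{k\to\infty}\lVert y_k-x^\star\rVert_2\le\frac{\delta}{1-\gamma}.$$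
   Context: $\lVert\cdot\rVert_2$ is the Euclidean norm, $A^*$ the adjoint, $\lVert\cdot\rVert_{2\to2}$ the induced operator norm, $p(A^*A)$ the polynomial evaluated at $A^*A$. For a closed proper convex $h$ and $\alpha>0$, $\mathrm{prox}_{\alpha h}(v)=\operatorname{argmin}_x \frac12\lVert x-v\rVert_2^2+\alpha h(x)$. In the paper the hypothesis $\gamma<1$ is asserted to follow from injectivity of $A^*A$ when $p$ is obtained by minimizing $\int_0^1(1-q(z)z)^2dz$ over polynomials of fixed degree. *)

From HB Require Import structures.
From mathcomp Require Import all_boot all_order all_algebra.
From mathcomp Require Import complex.
From mathcomp Require Import all_classical all_reals all_analysis.
Set Implicit Arguments. Unset Strict Implicit. Unset Printing Implicit Defensive.
Import Order.TTheory GRing.Theory Num.Theory.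
Local Open Scope ring_scope.
Local Open Scope classical_set_scope.

Section Defs.
Variable R : realType.
Local Notation C := R[i].

Definition csqmod (z : C) : R := (complex.Re z) ^+ 2 + (complex.Im z) ^+ 2.

Definition norm2 {n : nat} (v : 'cV[C]_n) : R :=
  Num.sqrt (\sum_(i < n) csqmod (v i 0)).

Definition adj {m n : nat} (A : 'M[C]_(m, n)) : 'M[C]_(n, m) :=
  map_mx (@conjc R) A^T.

Definition opnorm2 {m n : nat} (M : 'M[C]_(m, n)) : R :=
  sup [set norm2 (M *m x) | x in [set x : 'cV[C]_n | norm2 x <= 1]].

Definition poly_mx {n : nat} (p : {poly R}) (M : 'M[C]_n) : 'M[C]_n :=
  \sum_(i < size p) ((p`_i)%:C)%C *: M ^+ i.

(* convexity of a real-valued function on C^n (C^n viewed as a real vector space) *)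
Definition convex_fun {n : nat} (g : 'cV[C]_n -> R) : Prop :=
  forall (x y : 'cV[C]_n) (t : R), 0 <= t <= 1 ->
    g ((t%:C)%C *: x + ((1 - t)%:C)%C *: y) <= t * g x + (1 - t) * g y.

(* closedness (lower semicontinuity) of a real-valued function on C^n *)
Definition lsc_fun {n : nat} (g : 'cV[C]_n -> R) : Prop :=
  forall (x : 'cV[C]_n) (eps : R), 0 < eps ->
    exists2 d : R, 0 < d & forall y, norm2 (y - x) < d -> g x - eps < g y.

Definition is_prox {n : nat} (alpha : R) (h : 'cV[C]_n -> R) (v p : 'cV[C]_n) : Prop :=
  forall x, 2^-1 * norm2 (p - v) ^+ 2 + alpha * h p
            <= 2^-1 * norm2 (x - v) ^+ 2 + alpha * h x.

End Defs.

(* The minimizer xstar is a fixed point of the plain proximal gradient map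
   y |-> prox_{lambda g}(y - A^*(A y - b)): since ||A|| <= 1, the prox objective
   majorizes the least-squares objective up to a constant and touches it at xstar.
   The prox of a convex function is nonexpansive, and the difference of the two prox
   arguments is (I - p(A^*A) A^*A) e_k + (I - p(A^*A)) A^*(A xstar - b); hence
   ||e_(k+1)|| <= gamma ||e_k|| + delta.  Iterating, ||e_k|| - delta / (1 - gamma) is
   at most gamma^k times a constant, which tends to 0. *)

From HB Require Import structures.
From mathcomp Require Import all_boot all_order all_algebra.
From mathcomp Require Import complex.
From mathcomp Require Import all_classical all_reals all_analysis.
From mathcomp Require Import ring lra.
Import Order.TTheory GRing.Theory Num.Theory.
Local Open Scope ring_scope.

Section RealInnerProduct.
Context {R : realType} {n : nat}.
Local Notation C := R[i].
Implicit Types (u v w : 'cV[C]_n) (t : R).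

Definition rdot u v : R :=
  \sum_(i < n)
    (complex.Re (u i 0) * complex.Re (v i 0) + complex.Im (u i 0) * complex.Im (v i 0)).

Lemma rdotC u v : rdot u v = rdot v u.
Proof. by apply: eq_bigr => i _; ring. Qed.

Lemma rdotDr u v w : rdot u (v + w) = rdot u v + rdot u w.
Proof.
rewrite /rdot -big_split; apply: eq_bigr => i _ /=.
by rewrite !mxE; case: (v i 0) (w i 0) => [? ?] [? ?] /=; ring.
Qed.

Lemma rdotNr u v : rdot u (- v) = - rdot u v.
Proof.
rewrite /rdot -sumrN; apply: eq_bigr => i _.
by rewrite !mxE; case: (v i 0) => [? ?] /=; ring.
Qed.

Lemma rdotZr t u v : rdot u ((t%:C)%C *: v) = t * rdot u v.
Proof.
rewrite /rdot mulr_sumr; apply: eq_bigr => i _.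
by rewrite !mxE; case: (v i 0) => [? ?] /=; ring.
Qed.

Lemma rdotBr u v w : rdot u (v - w) = rdot u v - rdot u w.
Proof. by rewrite rdotDr rdotNr. Qed.

Lemma rdotDl u v w : rdot (v + w) u = rdot v u + rdot w u.
Proof. by rewrite rdotC rdotDr !(rdotC u). Qed.

Lemma rdotNl u v : rdot (- u) v = - rdot u v.
Proof. by rewrite rdotC rdotNr rdotC. Qed.

Lemma rdotBl u v w : rdot (v - w) u = rdot v u - rdot w u.
Proof. by rewrite rdotC rdotBr !(rdotC u). Qed.

Lemma rdotZl t u v : rdot ((t%:C)%C *: u) v = t * rdot u v.
Proof. by rewrite rdotC rdotZr rdotC. Qed.

Lemma rdot0l v : rdot 0 v = 0.
Proof. by rewrite /rdot big1 // => i _; rewrite mxE /=; ring. Qed.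

Lemma rdot_ReE u v : rdot u v = complex.Re (\sum_(i < n) (u i 0)^*%C * v i 0).
Proof.
rewrite (big_morph _ (raddfD (@complex.Re R : Rcomplex R -> R))
                   (erefl (complex.Re (0 : C)))) /=.
by apply: eq_bigr => i _; case: (u i 0) (v i 0) => [? ?] [? ?] /=; ring.
Qed.

Lemma norm2_sqrE v : norm2 v ^+ 2 = rdot v v.
Proof.
rewrite /norm2 sqr_sqrtr; last by apply: sumr_ge0 => i _; rewrite addr_ge0 ?sqr_ge0.
by apply: eq_bigr => i _; rewrite /csqmod !expr2.
Qed.

Lemma norm2_ge0 v : 0 <= norm2 v.
Proof. exact: sqrtr_ge0. Qed.

Lemma norm2_0 : norm2 (0 : 'cV[C]_n) = 0.
Proof. by rewrite /norm2 big1 ?sqrtr0 // => i _; rewrite mxE /csqmod /= expr0n addr0. Qed.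

Lemma norm2_eq0 v : norm2 v = 0 -> v = 0.
Proof.
move/eqP; rewrite sqrtr_eq0 le_eqVlt ltNge sumr_ge0 ?orbF => [|i _]; last first.
  by rewrite addr_ge0 ?sqr_ge0.
rewrite psumr_eq0 => [/allP v0|i _]; last by rewrite addr_ge0 ?sqr_ge0.
apply/matrixP => i j; rewrite (ord1 j) mxE.
move/(_ i (mem_index_enum _)): v0; rewrite /csqmod paddr_eq0 ?sqr_ge0 //.
by rewrite !sqrf_eq0; case: (v i 0) => [? ?] /andP[/eqP/= -> /eqP/= ->].
Qed.

Lemma norm2_sqrD u v :
  norm2 (u + v) ^+ 2 = norm2 u ^+ 2 + 2 * rdot u v + norm2 v ^+ 2.
Proof. by rewrite !norm2_sqrE rdotDl !rdotDr (rdotC v u); ring. Qed.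

Lemma norm2_sqrB u v :
  norm2 (u - v) ^+ 2 = norm2 u ^+ 2 - 2 * rdot u v + norm2 v ^+ 2.
Proof. by rewrite !norm2_sqrE rdotBl !rdotBr (rdotC v u); ring. Qed.

Lemma norm2_scale (a : C) v : norm2 (a *: v) = Num.sqrt (csqmod a) * norm2 v.
Proof.
rewrite /norm2 -sqrtrM ?addr_ge0 ?sqr_ge0 // mulr_sumr; congr Num.sqrt.
by apply: eq_bigr => i _; rewrite mxE /csqmod; case: a (v i 0) => [? ?] [? ?] /=; ring.
Qed.

Lemma norm2_scaleR t v : norm2 ((t%:C)%C *: v) = `|t| * norm2 v.
Proof. by rewrite norm2_scale /csqmod /= expr0n addr0 sqrtr_sqr. Qed.

Lemma rdot_le_norm2 u v : rdot u v <= norm2 u * norm2 v.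
Proof.
have [/norm2_eq0 ->|u_neq0] := eqVneq (norm2 u) 0.
  by rewrite rdot0l mulr_ge0 ?norm2_ge0.
have [/norm2_eq0 ->|v_neq0] := eqVneq (norm2 v) 0.
  by rewrite rdotC rdot0l mulr_ge0 ?norm2_ge0.
have u_gt0 : 0 < norm2 u by rewrite lt_def u_neq0 norm2_ge0.
have v_gt0 : 0 < norm2 v by rewrite lt_def v_neq0 norm2_ge0.
have := sqr_ge0 (norm2 ((norm2 v)%:C%C *: u - (norm2 u)%:C%C *: v)).
rewrite norm2_sqrB !norm2_scaleR rdotZl rdotZr !gtr0_norm // => sq_ge0.
have uv_gt0 : 0 < norm2 u * norm2 v by rewrite mulr_gt0.
have : 0 <= (2 * (norm2 u * norm2 v)) * (norm2 u * norm2 v - rdot u v) by nra.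
by rewrite pmulr_rge0 ?subr_ge0 // mulr_gt0.
Qed.

Lemma norm2D_le u v : norm2 (u + v) <= norm2 u + norm2 v.
Proof.
rewrite -(ler_pXn2r (_ : 0 < 2)%N) ?nnegrE ?addr_ge0 ?norm2_ge0 // norm2_sqrD.
by have := rdot_le_norm2 u v; nra.
Qed.

Lemma norm2_sum_le k (F : 'I_k -> 'cV[C]_n) :
  norm2 (\sum_(j < k) F j) <= \sum_(j < k) norm2 (F j).
Proof.
elim: k F => [|k IH] F; first by rewrite !big_ord0 norm2_0.
by rewrite !big_ord_recr /= (le_trans (norm2D_le _ _)) // lerD2r IH.
Qed.

Lemma norm2_entry_le v i : Num.sqrt (csqmod (v i 0)) <= norm2 v.
Proof.
apply: ler_wsqrtr; rewrite (bigD1 i) //= lerDl.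
by apply: sumr_ge0 => j _; rewrite addr_ge0 ?sqr_ge0.
Qed.

End RealInnerProduct.

Section OperatorNorm.
Context {R : realType} {m n : nat}.
Local Notation C := R[i].
Implicit Types (M : 'M[C]_(m, n)) (x : 'cV[C]_n).

Lemma norm2_mulmx_le_sum_col M x :
  norm2 (M *m x) <= norm2 x * \sum_(j < n) norm2 (col j M).
Proof.
have -> : M *m x = \sum_(j < n) x j 0 *: col j M.
  apply/matrixP => i k; rewrite !mxE summxE; apply: eq_bigr => j _.
  by rewrite !mxE (ord1 k) mulrC.
rewrite mulr_sumr (le_trans (norm2_sum_le _ _)) // ler_sum // => j _.
by rewrite norm2_scale ler_wpM2r ?norm2_ge0 ?norm2_entry_le.
Qed.

Lemma opnorm2_ubound M :
  has_ubound [set norm2 (M *m x) | x in [set x : 'cV[C]_n | norm2 x <= 1]].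
Proof.
exists (\sum_(j < n) norm2 (col j M)) => _ [x /= x_le1 <-].
rewrite (le_trans (norm2_mulmx_le_sum_col _ _)) // ler_piMl //.
by rewrite sumr_ge0 // => j _; rewrite norm2_ge0.
Qed.

Lemma opnorm2_ge0 M : 0 <= opnorm2 M.
Proof.
apply: (ub_le_sup (opnorm2_ubound M)).
by exists 0; rewrite /= ?norm2_0 // mulmx0 norm2_0.
Qed.

Lemma norm2_mulmx_le M x : norm2 (M *m x) <= opnorm2 M * norm2 x.
Proof.
have [/norm2_eq0 ->|x_neq0] := eqVneq (norm2 x) 0.
  by rewrite mulmx0 !norm2_0 mulr0.
have x_gt0 : 0 < norm2 x by rewrite lt_def x_neq0 norm2_ge0.
set x1 := (norm2 x)^-1%:C%C *: x.
have x1_unit : norm2 x1 = 1 by rewrite norm2_scaleR gtr0_norm ?invr_gt0 // mulVf.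
have : norm2 (M *m x1) <= opnorm2 M.
  by apply: (ub_le_sup (opnorm2_ubound M)); exists x1; rewrite //= x1_unit.
by rewrite -scalemxAr norm2_scaleR gtr0_norm ?invr_gt0 // -ler_pdivrMr // mulrC.
Qed.

Lemma rdot_adj (A : 'M[C]_(m, n)) x (r : 'cV[C]_m) :
  rdot (A *m x) r = rdot x (adj A *m r).
Proof.
rewrite !rdot_ReE; congr complex.Re.
under eq_bigr => i _ do rewrite mxE rmorph_sum /= mulr_suml.
rewrite exchange_big /=; apply: eq_bigr => j _.
rewrite mxE mulr_sumr; apply: eq_bigr => i _.
by rewrite /adj !mxE rmorphM /= mulrCA mulrA.
Qed.

End OperatorNorm.

Lemma ge0_of_ge0_addr_small (R : realFieldType) (a K : R) :
  0 <= K -> (forall t, 0 < t <= 1 -> 0 <= a + t * K) -> 0 <= a.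
Proof.
move=> K_ge0 small; apply/ler_addgt0Pr => e e_gt0.
set t := Num.min 1 (e / (K + 1)).
have t_gt0 : 0 < t by rewrite lt_min ltr01 divr_gt0 // ltr_wpDl.
have tK_le : t * K <= e.
  have : t * (K + 1) <= e by rewrite -ler_pdivlMr ?ltr_wpDl // ge_min lexx orbT.
  nra.
by apply: le_trans (small t _) _; rewrite ?lerD2l // t_gt0 ge_min lexx.
Qed.

Section Prox.
Context {R : realType} {n : nat} {alpha : R} {h : 'cV[R[i]]_n -> R}.
Hypotheses (alpha_ge0 : 0 <= alpha) (h_convex : convex_fun h).
Implicit Types (v p x : 'cV[R[i]]_n).

Lemma prox_variational_ineq v p : is_prox alpha h v p ->
  forall x, 0 <= rdot (x - p) (p - v) + alpha * (h x - h p).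
Proof.
move=> prox_p x.
(* Compare the prox objective at p with its value at p + t (x - p), then let t -> 0. *)
apply: (@ge0_of_ge0_addr_small _ _ (norm2 (x - p) ^+ 2 / 2)).
  by rewrite divr_ge0 ?sqr_ge0.
move=> t /andP[t_gt0 t_le1].
set z := t%:C%C *: x + (1 - t)%:C%C *: p.
have z_shift : z - v = t%:C%C *: (x - p) + (p - v).
  by apply/matrixP => i j; rewrite !mxE rmorphB rmorph1 /=; ring.
have h_z : alpha * h z <= alpha * (t * h x + (1 - t) * h p).
  by rewrite ler_wpM2l // h_convex // ltW.
have := prox_p z; rewrite z_shift (norm2_sqrD (t%:C%C *: (x - p))).
rewrite norm2_scaleR (gtr0_norm t_gt0) exprMn rdotZl => prox_ineq.
by rewrite -(pmulr_rge0 _ t_gt0); nra.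
Qed.

Lemma prox_nonexpansive {v1 v2 p1 p2} :
  is_prox alpha h v1 p1 -> is_prox alpha h v2 p2 ->
  norm2 (p1 - p2) <= norm2 (v1 - v2).
Proof.
move=> /prox_variational_ineq/(_ p2) ineq1 /prox_variational_ineq/(_ p1) ineq2.
have firm : norm2 (p1 - p2) ^+ 2 <= rdot (p1 - p2) (v1 - v2).
  rewrite -opprB rdotNl !rdotBr in ineq1; rewrite !rdotBr in ineq2.
  rewrite norm2_sqrE !rdotBr; lra.
have := rdot_le_norm2 (p1 - p2) (v1 - v2).
have := norm2_ge0 (p1 - p2); have := norm2_ge0 (v1 - v2); nra.
Qed.

End Prox.

Lemma gradient_step_subE (K : comNzRingType) m n (A : 'M[K]_(m, n))
    (B : 'M[K]_(n, m)) (P : 'M[K]_n) (b : 'cV[K]_m) (x y : 'cV[K]_n) :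
  (y - P *m B *m (A *m y - b)) - (x - B *m (A *m x - b)) =
  (1%:M - P *m (B *m A)) *m (y - x) + (1%:M - P) *m B *m (A *m x - b).
Proof.
have -> : A *m y - b = A *m (y - x) + (A *m x - b) by rewrite mulmxBr addrA subrK.
rewrite !mulmxBl !mul1mx mulmxDr -!mulmxA.
move: (P *m (B *m (A *m (y - x)))) (P *m (B *m (A *m x - b))) (B *m (A *m x - b)).
by move=> u v w; apply/matrixP => i j; rewrite !mxE; ring.
Qed.

Section LeastSquaresMinimizer.
Context {R : realType} {m n : nat} {A : 'M[R[i]]_(m, n)} {b : 'cV[R[i]]_m}.
Context {lambda : R} {g : 'cV[R[i]]_n -> R} {xstar : 'cV[R[i]]_n}.

Lemma is_prox_gradient_step_minimizer :
  opnorm2 A <= 1 ->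
  (forall x, 2^-1 * norm2 (A *m xstar - b) ^+ 2 + lambda * g xstar
             <= 2^-1 * norm2 (A *m x - b) ^+ 2 + lambda * g x) ->
  is_prox lambda g (xstar - adj A *m (A *m xstar - b)) xstar.
Proof.
move=> A_le1 xstar_min x; set r := A *m xstar - b.
have shift z : z - (xstar - adj A *m r) = (z - xstar) + adj A *m r.
  by rewrite opprB addrCA addrC.
have A_contr : norm2 (A *m (x - xstar)) ^+ 2 <= norm2 (x - xstar) ^+ 2.
  rewrite ler_pXn2r ?nnegrE ?norm2_ge0 // (le_trans (norm2_mulmx_le _ _)) //.
  by rewrite ler_piMl ?norm2_ge0.
have := xstar_min x.
have -> : A *m x - b = A *m (x - xstar) + r by rewrite mulmxBr addrA subrK.
rewrite !shift subrr add0r (norm2_sqrD (x - xstar)).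
by rewrite (norm2_sqrD (A *m (x - xstar))) rdot_adj; lra.
Qed.

End LeastSquaresMinimizer.

Section AffineContraction.
Context {R : realType} {c d : R} {u : nat -> R}.
Hypotheses (c_ge0 : 0 <= c) (c_lt1 : c < 1).
Hypothesis u_step : forall k, u k.+1 <= c * u k + d.

Lemma affine_contraction_le k :
  u k <= d / (1 - c) + c ^+ k * `|u 0%N - d / (1 - c)|.
Proof.
have fixed : d = d / (1 - c) - c * (d / (1 - c)).
  by field; rewrite subr_eq0 gt_eqF.
elim: k => [|k IH]; first by rewrite expr0 mul1r -lerBlDl ler_norm.
rewrite (le_trans (u_step k)) // exprS -mulrA.
have := ler_wpM2l c_ge0 IH; rewrite mulrDr; lra.
Qed.

Lemma limn_esup_affine_contraction :
  (limn_esup (fun k => (u k)%:E) <= (d / (1 - c))%:E)%E.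
Proof.
set L := d / (1 - c); set M := `|u 0%N - L|.
apply/lee_addgt0Pr => e e_gt0.
have : (\forall k \near \oo, c ^+ k * M <= e)%classic.
  have eM_gt0 : 0 < e / (M + 1) by rewrite divr_gt0 // ltr_wpDl ?normr_ge0.
  have /cvg_expr/cvgr0Pnorm_lt/(_ _ eM_gt0) : `|c| < 1 by rewrite ger0_norm.
  apply: filterS => k.
  rewrite ger0_norm ?exprn_ge0 // ltr_pdivlMr ?ltr_wpDl ?normr_ge0 // => ck_lt.
  have := exprn_ge0 k c_ge0; nra.
rewrite /limn_esup limf_esupE => -[N _ tail_le].
apply: (le_trans (ereal_inf_lbound _)).
  by exists [set k | (N <= k)%N]%classic => //; exists N.
apply: ge_ereal_sup => _ [k /= /tail_le ckM <-].
by rewrite -EFinD lee_fin (le_trans (affine_contraction_le k)) // lerD2l.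
Qed.

End AffineContraction.

Theorem mainTheorem7 (R : realType) (m n : nat)
  (A : 'M[R[i]]_(m, n)) (b : 'cV[R[i]]_m) (lambda : R)
  (g : 'cV[R[i]]_n -> R) (xstar : 'cV[R[i]]_n) (p : {poly R})
  (y : nat -> 'cV[R[i]]_n) :
  opnorm2 A <= 1 ->
  (forall x : 'cV[R[i]]_n, (adj A *m A) *m x = 0 -> x = 0) ->
  0 < lambda ->
  convex_fun g -> lsc_fun g ->
  (forall x : 'cV[R[i]]_n,
     2^-1 * norm2 (A *m xstar - b) ^+ 2 + lambda * g xstar
     <= 2^-1 * norm2 (A *m x - b) ^+ 2 + lambda * g x) ->
  let AA := adj A *m A in
  let gamma := opnorm2 (1%:M - poly_mx p AA *m AA) in
  let delta := norm2 ((1%:M - poly_mx p AA) *m adj A *m (A *m xstar - b)) in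
  gamma < 1 ->
  (forall k, is_prox lambda g
               (y k - poly_mx p AA *m adj A *m (A *m y k - b)) (y k.+1)) ->
  (forall k, norm2 (y k.+1 - xstar) <= gamma * norm2 (y k - xstar) + delta) /\
  (limn_esup (fun k => (norm2 (y k - xstar))%:E) <= (delta / (1 - gamma))%:E)%E.
Proof.
move=> A_le1 _ lambda_gt0 g_convex _ xstar_min AA gamma delta gamma_lt1 y_prox.
have xstar_fixed := is_prox_gradient_step_minimizer A_le1 xstar_min.
have error_step k : norm2 (y k.+1 - xstar) <= gamma * norm2 (y k - xstar) + delta.
  have := prox_nonexpansive (ltW lambda_gt0) g_convex (y_prox k) xstar_fixed.
  move/le_trans; apply.
  rewrite gradient_step_subE (le_trans (norm2D_le _ _)) // lerD2r.
  exact: norm2_mulmx_le.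
split=> //; exact: limn_esup_affine_contraction (opnorm2_ge0 _) gamma_lt1 error_step.
Qed.
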